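(* Let $k$ be a field and $\mathrm{Lin}\colon(\mathrm{Cospan}(\mathrm{FinSet}),+)\to(\mathrm{Set},\times)$ the lax symmetric monoidal functor sending a finite set $N$ to the set of linear subspaces of $k^N$, a function $f\colon N\to M$ to the map $L\mapsto\{v\in k^M\mid v\circ f\in L\}$, and an opposite function $g^{\mathrm{op}}\colon N\to M$ (for $g\colon M\to N$) to $L\mapsto\{u\circ g\mid u\in L\}$. Taking the factorisation system $(\mathcal I_{\mathrm{FinSet}},\mathrm{FinSet})$ (isomorphisms, all morphisms) on $\mathrm{FinSet}$, the decorated corelation category $\mathrm{Lin}\mathrm{Corel}$ has, as morphisms $X\to Y$, exactly the linear subspaces of $k^{X+Y}\cong k^X\oplus k^Y$, composed by relational composition; hence $\mathrm{Lin}\mathrm{Corel}$ is isomorphic to the category of linear relations between the finite-dimensional spaces $k^X$.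
   Context: For $(\mathcal E,\mathcal M)$ a costable factorisation system on $\mathcal C$ and $F\colon\mathcal C;\mathcal M^{\mathrm{op}}\to\mathrm{Set}$ lax symmetric monoidal (here $\mathcal C;\mathcal M^{\mathrm{op}}=\mathrm{Cospan}(\mathrm{FinSet})$ since $\mathcal M=\mathrm{FinSet}$), $F\mathrm{Corel}$ has morphisms isomorphism classes of pairs (cospan $X\xrightarrow{i}N\xleftarrow{o}Y$ with $[i,o]\in\mathcal E$, element $s\in FN$); composition of $(X\to N\leftarrow Y,s)$ and $(Y\to M\leftarrow Z,t)$: form the pushout $N+_YM$ with maps $j_N,j_M$, factor $[j_Ni_X,j_Mo_Z]=m\circ e$ with $e\in\mathcal E$, and decorate the cospan $X\to\overline{N+_YM}\leftarrow Z$ by $F(m^{\mathrm{op}})F[j_N,j_M]\varphi_{N,M}(s,t)$, where $m^{\mathrm{op}}=(\xrightarrow{1}\xleftarrow{m})$. The coherence map $\varphi_{N,M}$ of $\mathrm{Lin}$ sends $(L,L')$ to $L\oplus L'\subseteq k^{N+M}$. *)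

From HB Require Import structures.
From mathcomp Require Import all_boot all_order all_algebra.
Set Implicit Arguments. Unset Strict Implicit. Unset Printing Implicit Defensive.
Import GRing.Theory.
Local Open Scope ring_scope.

Definition kpow (k : fieldType) (N : finType) := {ffun N -> k^o}.

Definition precomp (k : fieldType) (N M : finType) (f : N -> M)
  (v : kpow k M) : kpow k N := [ffun n => v (f n)].

Lemma precomp_is_linear (k : fieldType) (N M : finType) (f : N -> M) :
  linear (@precomp k N M f).
Proof. by move=> a u v; apply/ffunP=> n; rewrite !ffunE. Qed.

HB.instance Definition _ (k : fieldType) (N M : finType) (f : N -> M) :=
  GRing.isLinear.Build k (kpow k M) (kpow k N) _ (@precomp k N M f)
    (@precomp_is_linear k N M f).

Definition Lin_fun (k : fieldType) (N M : finType) (f : N -> M)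
  (L : {vspace kpow k N}) : {vspace kpow k M} :=
  (linfun (@precomp k N M f) @^-1: L)%VS.

Definition Lin_op (k : fieldType) (M N : finType) (g : M -> N)
  (L : {vspace kpow k N}) : {vspace kpow k M} :=
  (linfun (@precomp k M N g) @: L)%VS.

Definition copair (A B C : Type) (f : A -> C) (g : B -> C) (s : A + B) : C :=
  match s with inl a => f a | inr b => g b end.

Definition Lin_phi (k : fieldType) (N M : finType)
  (L : {vspace kpow k N}) (L' : {vspace kpow k M}) : {vspace kpow k (N + M)%type} :=
  (Lin_fun (@inl N M) L :&: Lin_fun (@inr N M) L')%VS.

(* A Lin-decorated corelation X -> Y for the factorisation system
   (isomorphisms, all maps): a cospan X -> N <- Y with [i,o] an isomorphism,
   decorated by a subspace of k^N. *)
Record corel (k : fieldType) (X Y : finType) := Corel {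
  apex : finType;
  cin : X -> apex;
  cout : Y -> apex;
  cE : bijective (copair cin cout);
  cdec : {vspace kpow k apex}
}.

Definition corel_iso (k : fieldType) (X Y : finType) (a b : corel k X Y) : Prop :=
  exists h : apex a -> apex b,
    [/\ bijective h, h \o cin a =1 cin b, h \o cout a =1 cout b
      & Lin_fun h (cdec a) = cdec b].

Definition corel_rel (k : fieldType) (X Y : finType) (a : corel k X Y)
  : {vspace kpow k (X + Y)%type} :=
  Lin_op (copair (cin a) (cout a)) (cdec a).

Definition is_pushout (Y N M P : finType) (o : Y -> N) (i : Y -> M)
  (jN : N -> P) (jM : M -> P) : Prop :=
  jN \o o =1 jM \o i /\
  forall (Q : finType) (f : N -> Q) (g : M -> Q), f \o o =1 g \o i ->
    exists h : P -> Q, [/\ h \o jN =1 f, h \o jM =1 g &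
      forall h' : P -> Q, h' \o jN =1 f -> h' \o jM =1 g -> h' =1 h].

Lemma copair_inl_inr_bij (X Z : finType) :
  bijective (copair (@inl X Z) (@inr X Z)).
Proof. by exists id; case. Qed.

(* Composite of decorated corelations (formula of the paper): the
   factorisation of [jN i_X, jM o_Z] : X+Z -> P is m \o e with e = id (an iso)
   and m = [jN i_X, jM o_Z]; decoration F(m^op) F[jN,jM] phi(s,t). *)
Definition corel_comp (k : fieldType) (X Y Z : finType)
  (a : corel k X Y) (b : corel k Y Z) (P : finType)
  (jN : apex a -> P) (jM : apex b -> P) : corel k X Z :=
  @Corel k X Z (X + Z)%type (@inl X Z) (@inr X Z) (copair_inl_inr_bij X Z)
    (Lin_op (copair (jN \o cin a) (jM \o cout b))
       (Lin_fun (copair jN jM) (Lin_phi (cdec a) (cdec b)))).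

Arguments corel_comp {k X Y Z} a b {P} jN jM.

Lemma copair_id_bij (X : finType) : bijective (copair (@inl X X) (@inr X X)).
Proof. exact: copair_inl_inr_bij. Qed.

(* Identity decorated corelation: the identity cospan X -1-> X <-1- X decorated
   by F(! : 0 -> X)(unit) (unit = the whole (zero) space k^0), then factored:
   e = id_{X+X}, m = [1,1]. *)
Definition corel_id (k : fieldType) (X : finType) : corel k X X :=
  @Corel k X X (X + X)%type (@inl X X) (@inr X X) (copair_id_bij X)
    (Lin_op (copair (@id X) (@id X))
       (Lin_fun (fun v : void => match v with end) (fullv : {vspace kpow k void}))).

Definition glue (k : fieldType) (A B : finType) (u : kpow k A) (v : kpow k B)
  : kpow k (A + B)%type := [ffun s => copair u v s].

Definition lrel_comp (k : fieldType) (X Y Z : finType)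
  (S : {vspace kpow k (X + Y)%type}) (T : {vspace kpow k (Y + Z)%type})
  (w : kpow k (X + Z)%type) : Prop :=
  exists y : kpow k Y,
    glue [ffun x => w (inl x)] y \in S /\ glue y [ffun z => w (inr z)] \in T.

Definition lrel_id (k : fieldType) (X : finType) (w : kpow k (X + X)%type) : Prop :=
  forall x : X, w (inl x) = w (inr x).

(* A decorated corelation X -> Y for the factorisation system (isomorphisms,
   all maps) is a decorated cospan whose apex N is identified with X + Y by
   the bijection [i, o]; transporting the decoration along this bijection is
   injective and loses nothing, so classes of corelations are exactly the
   subspaces of k^(X+Y).  Composition decorates the pushout P by the vectors
   of k^P whose restrictions to the two apices lie in the two decorations;
   since k^(-) sends the pushout of finite sets to a pullback of vector
   spaces, such vectors are exactly the pairs of vectors agreeing on the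
   shared boundary Y, which is relational composition. *)

From HB Require Import structures.
From mathcomp Require Import all_boot all_order all_algebra.
Set Implicit Arguments. Unset Strict Implicit. Unset Printing Implicit Defensive.
Import GRing.Theory.
Local Open Scope ring_scope.

Section Precomposition.

Variable k : fieldType.

Lemma precomp_comp (A B C : finType) (f : A -> B) (g : B -> C) (v : kpow k C) :
  precomp f (precomp g v) = precomp (g \o f) v.
Proof. by apply/ffunP=> x; rewrite !ffunE. Qed.

Lemma eq_precomp (A B : finType) (f g : A -> B) (v : kpow k B) :
  f =1 g -> precomp f v = precomp g v.
Proof. by move=> fg; apply/ffunP=> x; rewrite !ffunE fg. Qed.

Lemma precomp_id (A : finType) (f : A -> A) (v : kpow k A) :
  f =1 id -> precomp f v = v.
Proof. by move=> fid; apply/ffunP=> x; rewrite !ffunE fid. Qed.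

Lemma precomp_inj (A B : finType) (g : A -> B) (gi : B -> A) :
  cancel gi g -> injective (@precomp k A B g).
Proof.
move=> giK u v /(congr1 (precomp gi)).
by rewrite !precomp_comp !precomp_id // => x /=; rewrite giK.
Qed.

Lemma precomp_copair (A B C : finType) (f : A -> C) (g : B -> C) (v : kpow k C) :
  precomp (copair f g) v = glue (precomp f v) (precomp g v).
Proof. by apply/ffunP=> -[a|b]; rewrite !ffunE /= ffunE. Qed.

Lemma precomp_inl_glue (A B : finType) (u : kpow k A) (v : kpow k B) :
  precomp inl (glue u v) = u.
Proof. by apply/ffunP=> a; rewrite !ffunE. Qed.

Lemma precomp_inr_glue (A B : finType) (u : kpow k A) (v : kpow k B) :
  precomp inr (glue u v) = v.
Proof. by apply/ffunP=> b; rewrite !ffunE. Qed.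

Lemma glue_precomp (A B : finType) (w : kpow k (A + B)%type) :
  glue (precomp inl w) (precomp inr w) = w.
Proof. by rewrite -precomp_copair precomp_id //; case. Qed.

(* The universal property only maps into finite sets, so we glue into the
   finite set of values taken by [s] and [t]. *)
Lemma pushout_glue (Y N M P : finType) (o : Y -> N) (i : Y -> M)
    (jN : N -> P) (jM : M -> P) (s : kpow k N) (t : kpow k M) :
  is_pushout o i jN jM -> precomp o s = precomp i t ->
  exists u, precomp jN u = s /\ precomp jM u = t.
Proof.
move=> [_ univ] st.
pose l : seq k := codom s ++ codom t.
have sl n : s n \in l by rewrite mem_cat codom_f.
have tl m : t m \in l by rewrite mem_cat orbC codom_f.
have agree : (fun n => SeqSub (sl n)) \o o =1 (fun m => SeqSub (tl m)) \o i.
  move=> y; apply: val_inj => /=.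
  by have := congr1 (fun v : kpow k Y => v y) st; rewrite !ffunE.
have [h [hN hM _]] := univ _ _ _ agree.
exists [ffun p => ssval (h p)].
by split; apply/ffunP=> x; rewrite !ffunE; [have /= -> := hN x | have /= -> := hM x].
Qed.

End Precomposition.

Section LinearImages.

Variable k : fieldType.

Lemma mem_Lin_op (M N : finType) (g : M -> N) (L : {vspace kpow k N}) w :
  (w \in Lin_op g L) <-> exists2 u, u \in L & w = precomp g u.
Proof.
split; first by move/memv_imgP=> [u uL ->]; exists u; rewrite ?lfunE.
by move=> [u uL ->]; apply/memv_imgP; exists u; rewrite ?lfunE.
Qed.

Lemma mem_Lin_fun (N M : finType) (f : N -> M) (L : {vspace kpow k N}) v :
  (v \in Lin_fun f L) = (precomp f v \in L).
Proof. by rewrite /Lin_fun -memv_preim lfunE. Qed.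

Lemma mem_Lin_phi (N M : finType) (L : {vspace kpow k N})
    (L' : {vspace kpow k M}) v :
  (v \in Lin_phi L L') = (precomp inl v \in L) && (precomp inr v \in L').
Proof. by rewrite /Lin_phi memv_cap !mem_Lin_fun. Qed.

Lemma eq_Lin_op (M N : finType) (f g : M -> N) (L : {vspace kpow k N}) :
  f =1 g -> Lin_op f L = Lin_op g L.
Proof.
move=> fg; apply/vspaceP=> w.
by apply/idP/idP=> /mem_Lin_op [u uL ->]; apply/mem_Lin_op; exists u;
  rewrite // (eq_precomp _ fg).
Qed.

Lemma Lin_op_id (A : finType) (f : A -> A) (L : {vspace kpow k A}) :
  f =1 id -> Lin_op f L = L.
Proof.
move=> fid; apply/vspaceP=> w; apply/idP/idP.
  by move/mem_Lin_op=> [u uL ->]; rewrite precomp_id.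
by move=> wL; apply/mem_Lin_op; exists w; rewrite ?precomp_id.
Qed.

Lemma Lin_opK (M N : finType) (g : M -> N) (gi : N -> M) :
  cancel gi g -> cancel (@Lin_op k M N g) (Lin_fun g).
Proof.
move=> giK L; apply/vspaceP=> v; rewrite mem_Lin_fun; apply/idP/idP.
  by move/mem_Lin_op=> [u uL /(precomp_inj giK) ->].
by move=> vL; apply/mem_Lin_op; exists v.
Qed.

Lemma Lin_op_comp_Lin_fun (M N Q : finType) (f : M -> N) (h : N -> Q)
    (hi : Q -> N) (L : {vspace kpow k N}) :
  cancel h hi -> Lin_op (h \o f) (Lin_fun h L) = Lin_op f L.
Proof.
move=> hK; apply/vspaceP=> w; apply/idP/idP; move/mem_Lin_op=> [u uL ->].
  by apply/mem_Lin_op; exists (precomp h u); rewrite -?mem_Lin_fun ?precomp_comp.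
apply/mem_Lin_op; exists (precomp hi u).
  by rewrite mem_Lin_fun precomp_comp precomp_id // => x /=; rewrite hK.
by rewrite precomp_comp; apply: eq_precomp => x /=; rewrite hK.
Qed.

End LinearImages.

Section Corelations.

Variable k : fieldType.

Lemma corel_rel_iso_eq (X Y : finType) (a b : corel k X Y) :
  corel_iso a b -> corel_rel a = corel_rel b.
Proof.
move=> [h [[hi hK _] hin hout hdec]].
rewrite /corel_rel -hdec -(Lin_op_comp_Lin_fun (copair (cin a) (cout a)) _ hK).
by apply: eq_Lin_op => -[x|y] /=; [exact: hin | exact: hout].
Qed.

(* The comparison map is [h = [i_b, o_b] \o [i_a, o_a]^-1]. *)
Lemma corel_rel_eq_iso (X Y : finType) (a b : corel k X Y) :
  corel_rel a = corel_rel b -> corel_iso a b.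
Proof.
have [ia aK aiK] := cE a; have [ib bK biK] := cE b.
set ca := copair (cin a) (cout a) in aK aiK *.
set cb := copair (cin b) (cout b) in bK biK *.
have hca : (cb \o ia) \o ca =1 cb by move=> q /=; rewrite aK.
have hK : cancel (cb \o ia) (ca \o ib) by move=> p /=; rewrite bK aiK.
move=> rel_ab; exists (cb \o ia); split.
- by exists (ca \o ib) => // q /=; rewrite aK biK.
- by move=> x; apply: (hca (inl x)).
- by move=> y; apply: (hca (inr y)).
apply: (can_inj (Lin_opK biK)).
by rewrite -(eq_Lin_op _ hca) (Lin_op_comp_Lin_fun _ _ hK).
Qed.

Lemma corel_rel_surj (X Y : finType) (S : {vspace kpow k (X + Y)%type}) :
  exists a : corel k X Y, corel_rel a = S.
Proof.
exists (@Corel k X Y (X + Y)%type (@inl X Y) (@inr X Y) (copair_inl_inr_bij X Y) S).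
by rewrite /corel_rel Lin_op_id //; case.
Qed.

Lemma mem_corel_rel (X Y : finType) (a : corel k X Y) v :
  (v \in corel_rel a) <->
  exists2 s, s \in cdec a & v = glue (precomp (cin a) s) (precomp (cout a) s).
Proof.
split=> [/mem_Lin_op [s sa ->] | [s sa ->]]; last apply/mem_Lin_op;
  by exists s; rewrite ?precomp_copair.
Qed.

Lemma mem_corel_comp (X Y Z : finType) (a : corel k X Y) (b : corel k Y Z)
    (P : finType) (jN : apex a -> P) (jM : apex b -> P) w :
  (w \in corel_rel (corel_comp a b jN jM)) <->
  exists2 u, (precomp jN u \in cdec a) && (precomp jM u \in cdec b) &
    w = glue (precomp (jN \o cin a) u) (precomp (jM \o cout b) u).
Proof.
rewrite /corel_rel /= Lin_op_id; last by case.
split=> [/mem_Lin_op [u uab ->] | [u uab ->]]; last apply/mem_Lin_op;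
  by exists u; rewrite ?precomp_copair // mem_Lin_fun mem_Lin_phi !precomp_comp in uab *.
Qed.

Lemma corel_rel_comp (X Y Z : finType) (a : corel k X Y) (b : corel k Y Z)
    (P : finType) (jN : apex a -> P) (jM : apex b -> P) :
  is_pushout (cout a) (cin b) jN jM ->
  forall w : kpow k (X + Z)%type,
    w \in corel_rel (corel_comp a b jN jM) <->
    lrel_comp (corel_rel a) (corel_rel b) w.
Proof.
move=> po w; have [comm _] := po.
change (w \in corel_rel (corel_comp a b jN jM) <->
  exists y, glue (precomp inl w) y \in corel_rel a /\
            glue y (precomp inr w) \in corel_rel b).
apply: iff_trans; first exact: mem_corel_comp.
split.
  move=> [u /andP[ua ub] ->]; exists (precomp (jN \o cout a) u).
  rewrite precomp_inl_glue precomp_inr_glue.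
  by split; apply/mem_corel_rel; [exists (precomp jN u) | exists (precomp jM u)];
    rewrite // !precomp_comp (eq_precomp _ comm).
move=> [y [/mem_corel_rel [s sa es] /mem_corel_rel [t tb et]]].
have := congr1 (precomp inl) es; have := congr1 (precomp inr) es.
have := congr1 (precomp inl) et; have := congr1 (precomp inr) et.
rewrite !precomp_inl_glue !precomp_inr_glue => wt yt ys ws.
have [u [us ut]] := pushout_glue po (etrans (esym ys) yt).
exists u; first by rewrite us ut sa tb.
by rewrite -(precomp_comp (cin a)) -(precomp_comp (cout b)) us ut -ws -wt glue_precomp.
Qed.

Lemma corel_rel_id (X : finType) (w : kpow k (X + X)%type) :
  w \in corel_rel (corel_id k X) <-> lrel_id w.
Proof.
rewrite /corel_rel /= !Lin_op_id; last by case.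
split; first by move/mem_Lin_op=> [u _ ->] x; rewrite !ffunE.
move=> wdiag; apply/mem_Lin_op; exists (precomp inl w).
  by rewrite mem_Lin_fun memvf.
by apply/ffunP=> -[x|x]; rewrite !ffunE //= wdiag.
Qed.

End Corelations.

Theorem mainTheorem15 (k : fieldType) :
  (forall (X Y : finType) (a b : corel k X Y),
      corel_iso a b -> corel_rel a = corel_rel b) /\
  (forall (X Y : finType) (a b : corel k X Y),
      corel_rel a = corel_rel b -> corel_iso a b) /\
  (forall (X Y : finType) (S : {vspace kpow k (X + Y)%type}),
      exists a : corel k X Y, corel_rel a = S) /\
  (forall (X Y Z : finType) (a : corel k X Y) (b : corel k Y Z)
          (P : finType) (jN : apex a -> P) (jM : apex b -> P),
      is_pushout (cout a) (cin b) jN jM ->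
      forall w : kpow k (X + Z)%type,
        w \in corel_rel (corel_comp a b jN jM) <->
        lrel_comp (corel_rel a) (corel_rel b) w) /\
  (forall (X : finType) (w : kpow k (X + X)%type),
      w \in corel_rel (corel_id k X) <-> lrel_id w).
Proof.
split; first exact: corel_rel_iso_eq.
split; first exact: corel_rel_eq_iso.
split; first exact: corel_rel_surj.
split; first exact: corel_rel_comp.
exact: corel_rel_id.
Qed.
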